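(* Let $G$ be an infinite simple graph. Then either $\theta(G)=1$ (which happens exactly when $G$ is asymmetric), or $\theta(G)=\infty$, i.e. for no finite $k$ is every vertex coloring of $G$ using exactly $k$ colors distinguishing.
   Context: A vertex coloring of $G$ is distinguishing if no non-identity automorphism of $G$ maps every vertex to a vertex of the same color. The distinguishing threshold $\theta(G)$ is the minimum number $k$ such that every vertex coloring of $G$ using exactly $k$ colors is distinguishing, and $\theta(G)=\infty$ if no finite such $k$ exists. Equivalently, $\theta(G)-1$ is the supremum of the number of cycles (fixed points counted as cycles) of non-identity automorphisms of $G$. *)

From Stdlib Require Import List Arith.

Record simple_graph := SimpleGraph {
  vertex :> Type;
  adj : vertex -> vertex -> Prop;
  adj_sym : forall x y, adj x y -> adj y x;
  adj_irrefl : forall x, ~ adj x x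
}.

Definition infinite_graph (G : simple_graph) : Prop :=
  ~ exists l : list G, forall v : G, In v l.

Definition automorphism (G : simple_graph) (f : G -> G) : Prop :=
  (forall x y : G, f x = f y -> x = y) /\
  (forall y : G, exists x, f x = y) /\
  (forall x y : G, adj G x y <-> adj G (f x) (f y)).

Definition asymmetric (G : simple_graph) : Prop :=
  forall f : G -> G, automorphism G f -> forall x, f x = x.

Definition uses_exactly (G : simple_graph) (c : G -> nat) (k : nat) : Prop :=
  (forall v, c v < k) /\ (forall i, i < k -> exists v, c v = i).

Definition distinguishing (G : simple_graph) (c : G -> nat) : Prop :=
  forall f : G -> G, automorphism G f -> (forall v, c (f v) = c v) ->
    forall v, f v = v.

Definition all_k_distinguishing (G : simple_graph) (k : nat) : Prop :=
  forall c : G -> nat, uses_exactly G c k -> distinguishing G c.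

(* theta_is G (Some k): theta(G) = k, the least k >= 1 such that every coloring
   with exactly k colors is distinguishing; theta_is G None: theta(G) = infinity. *)
Definition theta_is (G : simple_graph) (t : option nat) : Prop :=
  match t with
  | Some k => 1 <= k /\ all_k_distinguishing G k /\
              (forall j, 1 <= j -> all_k_distinguishing G j -> k <= j)
  | None => forall k, 1 <= k -> ~ all_k_distinguishing G k
  end.

(* theta(G) = 1 means that the single constant colouring is distinguishing,
   i.e. that G is asymmetric.  So it suffices to show that a non-identity
   automorphism f of an infinite graph defeats every k >= 1: we exhibit a
   colouring with exactly k colours preserved by some non-identity power of f.
   - If some vertex x0 has an infinite f-orbit, colour v by (i - m) mod k when
     f^m v = f^i x0 (and 0 off the orbit); f^k preserves it and moves x0.
   - Otherwise every orbit is finite; since G is infinite there are k distinct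
     orbits, coloured 0..k-1 (everything else 0); f itself preserves it. *)

From Stdlib Require Import List Arith Lia Classical ClassicalEpsilon.

Lemma iter_comm {A : Type} (f : A -> A) (a b : nat) (x : A) :
  Nat.iter a f (Nat.iter b f x) = Nat.iter b f (Nat.iter a f x).
Proof. rewrite <- !Nat.iter_add. now rewrite Nat.add_comm. Qed.

Lemma iter_periodic {A : Type} (f : A -> A) (p : nat) (y : A) :
  Nat.iter p f y = y -> forall q r, Nat.iter (q * p + r) f y = Nat.iter r f y.
Proof.
  intros Hp q. induction q as [|q IH]; intros r; [reflexivity|].
  replace (S q * p + r) with ((q * p + r) + p) by lia.
  now rewrite Nat.iter_add, Hp.
Qed.

(* The (nat-valued) residue of i - m modulo k, written without subtraction as
   i + (k-1) m, only depends on the difference i - m. *)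
Lemma mod_shift_eq (k i m i' m' : nat) : 1 <= k -> i + m' = i' + m ->
  (i + (k - 1) * m) mod k = (i' + (k - 1) * m') mod k.
Proof.
  intros Hk H.
  rewrite <- (Nat.Div0.mod_add (i + (k - 1) * m) m' k).
  rewrite <- (Nat.Div0.mod_add (i' + (k - 1) * m') m k).
  f_equal. nia.
Qed.

Lemma automorphism_comp (G : simple_graph) (f g : G -> G) :
  automorphism G f -> automorphism G g -> automorphism G (fun x => f (g x)).
Proof.
  intros [fi [fs fa]] [gi [gs ga]]. split; [|split].
  - intros x y H. apply gi, fi, H.
  - intros y. destruct (fs y) as [z <-]. destruct (gs z) as [w <-]. now exists w.
  - intros x y. rewrite ga. apply fa.
Qed.

Lemma automorphism_iter (G : simple_graph) (f : G -> G) (n : nat) :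
  automorphism G f -> automorphism G (Nat.iter n f).
Proof.
  intros Hf. induction n as [|n IH].
  - split; [|split]; [easy| intros y; now exists y | easy].
  - exact (automorphism_comp G f (Nat.iter n f) Hf IH).
Qed.

Section ColorOfRelation.
Variable V : Type.
Variable R : V -> nat -> Prop.

Definition color_of (v : V) : nat :=
  match excluded_middle_informative (exists c, R v c) with
  | left h => proj1_sig (constructive_indefinite_description _ h)
  | right _ => 0
  end.

Lemma color_of_default (v : V) : ~ (exists c, R v c) -> color_of v = 0.
Proof. intros H. unfold color_of. destruct excluded_middle_informative; tauto. Qed.

Hypothesis R_functional : forall v c c', R v c -> R v c' -> c = c'.

Lemma color_of_spec (v : V) (c : nat) : R v c -> color_of v = c.
Proof.
  intros H. unfold color_of. destruct excluded_middle_informative as [h|h].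
  - destruct constructive_indefinite_description as [c' Hc']; simpl.
    exact (R_functional v c' c Hc' H).
  - exfalso. eauto.
Qed.

Lemma color_of_transfer (v w : V) :
  (forall c, R v c <-> R w c) -> color_of v = color_of w.
Proof.
  intros Hvw. destruct (classic (exists c, R v c)) as [[c Hc]|Hno].
  - rewrite (color_of_spec v c Hc). symmetry. apply color_of_spec, Hvw, Hc.
  - rewrite (color_of_default v Hno). symmetry. apply color_of_default.
    intros [c Hc]. apply Hno. exists c. now apply Hvw.
Qed.
End ColorOfRelation.

Arguments color_of {V} R v.

Lemma color_of_uses_exactly (G : simple_graph) (R : G -> nat -> Prop) (k : nat) :
  1 <= k -> (forall v c c', R v c -> R v c' -> c = c') ->
  (forall v c, R v c -> c < k) -> (forall i, i < k -> exists v, R v i) ->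
  uses_exactly G (color_of R) k.
Proof.
  intros Hk Hfun Hbound Honto. split.
  - intros v. destruct (classic (exists c, R v c)) as [[c Hc]|Hno].
    + rewrite (color_of_spec G R Hfun v c Hc). exact (Hbound v c Hc).
    + rewrite (color_of_default G R v Hno). lia.
  - intros i Hi. destruct (Honto i Hi) as [v Hv].
    exists v. exact (color_of_spec G R Hfun v i Hv).
Qed.

Lemma invariant_coloring_obstruction (G : simple_graph) (g : G -> G)
    (c : G -> nat) (k : nat) :
  automorphism G g -> (exists x, g x <> x) -> uses_exactly G c k ->
  (forall v, c (g v) = c v) -> ~ all_k_distinguishing G k.
Proof.
  intros Hg [x Hx] Hc Hinv Hall. apply Hx. exact (Hall c Hc g Hg Hinv x).
Qed.

Section InfiniteOrbit.
Variable G : simple_graph.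
Variable f : G -> G.
Hypothesis Hf : automorphism G f.
Variable x0 : G.
Hypothesis x0_aperiodic : forall n, 1 <= n -> Nat.iter n f x0 <> x0.

Lemma orbit_index_inj (a b : nat) : Nat.iter a f x0 = Nat.iter b f x0 -> a = b.
Proof.
  assert (Hlt : forall a b, a < b -> Nat.iter a f x0 <> Nat.iter b f x0).
  { intros a' b' Hab E. replace b' with (a' + (b' - a')) in E by lia.
    rewrite Nat.iter_add in E.
    apply (proj1 (automorphism_iter G f a' Hf)) in E.
    apply (x0_aperiodic (b' - a')); [lia | now symmetry]. }
  intros E. destruct (Nat.lt_total a b) as [H|[H|H]]; auto.
  - exfalso. exact (Hlt a b H E).
  - exfalso. exact (Hlt b a H (eq_sym E)).
Qed.

Variable k : nat.
Hypothesis Hk : 1 <= k.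

(* [shift_color v c]: v = f^(i-m) x0 (witnessed by f^m v = f^i x0) and c is
   the residue (i - m) mod k. *)
Definition shift_color (v : G) (c : nat) : Prop :=
  exists m i, Nat.iter m f v = Nat.iter i f x0 /\ c = (i + (k - 1) * m) mod k.

Lemma shift_color_functional (v : G) (c c' : nat) :
  shift_color v c -> shift_color v c' -> c = c'.
Proof.
  intros (m & i & H & ->) (m' & i' & H' & ->).
  apply mod_shift_eq; [exact Hk|].
  assert (E : Nat.iter (m' + i) f x0 = Nat.iter (m + i') f x0).
  { rewrite !Nat.iter_add, <- H, <- H', <- !Nat.iter_add. f_equal. lia. }
  apply orbit_index_inj in E. lia.
Qed.

Lemma shift_color_iter_k (v : G) (c : nat) :
  shift_color v c <-> shift_color (Nat.iter k f v) c.
Proof.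
  split.
  - intros (m & i & H & ->). exists m, (i + k). split.
    + now rewrite iter_comm, H, Nat.add_comm, Nat.iter_add.
    + replace (i + k + (k - 1) * m) with ((i + (k - 1) * m) + 1 * k) by lia.
      now rewrite Nat.Div0.mod_add.
  - intros (m & i & H & ->). exists (m + k), i. split.
    + now rewrite Nat.iter_add.
    + replace (i + (k - 1) * (m + k)) with ((i + (k - 1) * m) + (k - 1) * k)
        by lia.
      now rewrite Nat.Div0.mod_add.
Qed.

Lemma infinite_orbit_obstruction : ~ all_k_distinguishing G k.
Proof.
  apply (invariant_coloring_obstruction G (Nat.iter k f) (color_of shift_color)).
  - exact (automorphism_iter G f k Hf).
  - exists x0. exact (x0_aperiodic k Hk).
  - apply color_of_uses_exactly; [exact Hk | exact shift_color_functional | |].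
    + intros v c (m & i & _ & ->). apply Nat.mod_upper_bound. lia.
    + intros i Hi. exists (Nat.iter i f x0), 0, i. split; [reflexivity|].
      rewrite Nat.mul_0_r, Nat.add_0_r. symmetry. now apply Nat.mod_small.
  - intros v. symmetry. apply color_of_transfer;
      [exact shift_color_functional | apply shift_color_iter_k].
Qed.
End InfiniteOrbit.

Section FiniteOrbits.
Variable G : simple_graph.
Hypothesis Hinf : infinite_graph G.
Variable f : G -> G.
Hypothesis Hf : automorphism G f.
Hypothesis f_periodic : forall x : G, exists p, 1 <= p /\ Nat.iter p f x = x.

Definition same_orbit (x y : G) : Prop := exists n, Nat.iter n f x = y.

Lemma same_orbit_refl (x : G) : same_orbit x x.
Proof. now exists 0. Qed.

Lemma same_orbit_trans (x y z : G) :
  same_orbit x y -> same_orbit y z -> same_orbit x z.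
Proof. intros [a <-] [b <-]. exists (b + a). apply Nat.iter_add. Qed.

(* Symmetry uses periodicity: going forward around the cycle gets back. *)
Lemma same_orbit_sym (x y : G) : same_orbit x y -> same_orbit y x.
Proof.
  intros [n <-]. destruct (f_periodic x) as [p [Hp1 Hp]].
  exists (n * p - n). rewrite <- Nat.iter_add.
  replace (n * p - n + n) with (n * p + 0) by nia.
  exact (iter_periodic f p x Hp n 0).
Qed.

Lemma orbit_finite (y : G) : exists M, forall v, same_orbit y v -> In v M.
Proof.
  destruct (f_periodic y) as [p [Hp1 Hp]].
  exists (map (fun j => Nat.iter j f y) (seq 0 p)).
  intros v [n <-]. apply in_map_iff. exists (n mod p). split.
  - rewrite <- (iter_periodic f p y Hp (n / p) (n mod p)). f_equal.
    rewrite Nat.mul_comm. symmetry. apply Nat.div_mod_eq.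
  - apply in_seq. split; [lia|]. apply Nat.mod_upper_bound. lia.
Qed.

Lemma orbits_finite (r : nat -> G) (n : nat) :
  exists M, forall i v, i < n -> same_orbit (r i) v -> In v M.
Proof.
  induction n as [|n [M HM]].
  - exists nil. intros i v Hi. lia.
  - destruct (orbit_finite (r n)) as [M1 HM1]. exists (M1 ++ M).
    intros i v Hi Hv. apply in_or_app.
    destruct (Nat.eq_dec i n) as [->|Hne]; [left; auto | right; apply (HM i); auto; lia].
Qed.

Lemma vertex_outside (M : list G) : exists v, ~ In v M.
Proof. apply not_all_ex_not. intros H. apply Hinf. now exists M. Qed.

Lemma orbit_representatives (n : nat) :
  exists r : nat -> G,
    forall i j, i < n -> j < n -> same_orbit (r i) (r j) -> i = j.
Proof.
  induction n as [|n [r Hr]].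
  - destruct (vertex_outside nil) as [v _].
    exists (fun _ => v). intros i j Hi. lia.
  - destruct (orbits_finite r n) as [M HM].
    destruct (vertex_outside M) as [v Hv].
    exists (fun i => if i =? n then v else r i).
    intros i j Hi Hj.
    destruct (Nat.eqb_spec i n) as [->|Hin], (Nat.eqb_spec j n) as [->|Hjn];
      intros Hij.
    + reflexivity.
    + exfalso. apply Hv, (HM j); [lia | now apply same_orbit_sym].
    + exfalso. apply Hv, (HM i); [lia | exact Hij].
    + apply Hr; [lia | lia | exact Hij].
Qed.

Section Representatives.
Variable k : nat.
Variable r : nat -> G.
Hypothesis r_distinct :
  forall i j, i < k -> j < k -> same_orbit (r i) (r j) -> i = j.

Definition orbit_color (v : G) (j : nat) : Prop := j < k /\ same_orbit (r j) v.

Lemma orbit_color_functional (v : G) (j j' : nat) :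
  orbit_color v j -> orbit_color v j' -> j = j'.
Proof.
  intros [Hj Hrj] [Hj' Hrj']. apply r_distinct; [exact Hj | exact Hj' |].
  exact (same_orbit_trans _ _ _ Hrj (same_orbit_sym _ _ Hrj')).
Qed.

Lemma orbit_color_step (v : G) (j : nat) : orbit_color v j <-> orbit_color (f v) j.
Proof.
  unfold orbit_color. split; intros [Hj Hrj]; split; [exact Hj | | exact Hj |].
  - apply (same_orbit_trans _ _ _ Hrj). now exists 1.
  - apply (same_orbit_trans _ _ _ Hrj), same_orbit_sym. now exists 1.
Qed.
End Representatives.

Lemma finite_orbits_obstruction (k : nat) :
  1 <= k -> (exists x, f x <> x) -> ~ all_k_distinguishing G k.
Proof.
  intros Hk Hmoved. destruct (orbit_representatives k) as [r Hr].
  apply (invariant_coloring_obstruction G f (color_of (orbit_color k r)) k Hf Hmoved).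
  - apply color_of_uses_exactly; [exact Hk | exact (orbit_color_functional k r Hr) | |].
    + intros v j [Hj _]. exact Hj.
    + intros i Hi. exists (r i). split; [exact Hi | apply same_orbit_refl].
  - intros v. symmetry. apply color_of_transfer;
      [exact (orbit_color_functional k r Hr) | apply orbit_color_step].
Qed.
End FiniteOrbits.

Lemma nonasymmetric_not_distinguishing (G : simple_graph) :
  infinite_graph G -> ~ asymmetric G ->
  forall k, 1 <= k -> ~ all_k_distinguishing G k.
Proof.
  intros Hinf Hna k Hk.
  apply not_all_ex_not in Hna as [f Hf].
  apply imply_to_and in Hf as [Hf Hmoved].
  apply not_all_ex_not in Hmoved as [x Hx].
  destruct (classic (exists x0 : G, forall n, 1 <= n -> Nat.iter n f x0 <> x0))
    as [[x0 Hx0]|Hper].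
  - exact (infinite_orbit_obstruction G f Hf x0 Hx0 k Hk).
  - assert (Hfin : forall y : G, exists p, 1 <= p /\ Nat.iter p f y = y).
    { intros y. apply NNPP. intros Hy. apply Hper. exists y.
      intros n Hn E. apply Hy. now exists n. }
    exact (finite_orbits_obstruction G Hinf f Hf Hfin k Hk (ex_intro _ x Hx)).
Qed.

Lemma one_distinguishing_iff_asymmetric (G : simple_graph) :
  all_k_distinguishing G 1 <-> asymmetric G.
Proof.
  split.
  - intros Hall f Hf x. apply (Hall (fun _ => 0)); [| exact Hf | reflexivity].
    split; [intros; lia|]. intros i Hi. exists x. lia.
  - intros Hasym c _ f Hf _. exact (Hasym f Hf).
Qed.

Lemma theta_one_iff (G : simple_graph) :
  theta_is G (Some 1) <-> all_k_distinguishing G 1.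
Proof. simpl. split; [tauto|]. intros H. repeat split; auto. Qed.

Theorem mainTheorem8 (G : simple_graph) (Hinf : infinite_graph G) :
  (theta_is G (Some 1) \/ theta_is G None) /\
  (theta_is G (Some 1) <-> asymmetric G).
Proof.
  assert (Hone : theta_is G (Some 1) <-> asymmetric G).
  { rewrite theta_one_iff. apply one_distinguishing_iff_asymmetric. }
  split; [|exact Hone].
  destruct (classic (asymmetric G)) as [Hasym|Hna].
  - left. now apply Hone.
  - right. exact (nonasymmetric_not_distinguishing G Hinf Hna).
Qed.
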